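(* Let $\zeta_3=\int_0^\infty \frac{\mathrm{d}t}{\sqrt{1+t^6}}$ and let $\mathrm{sleafh}_3:(-\zeta_3,\zeta_3)\to\mathbb{R}$ be the hyperbolic leaf function of basis $3$. For every real $l$ with $2l\in(-\zeta_3,\zeta_3)$, $$\mathrm{sleafh}_3(2l)=\frac{2\,\mathrm{sleafh}_3(l)\sqrt{1+(\mathrm{sleafh}_3(l))^6}}{\sqrt{1-8(\mathrm{sleafh}_3(l))^6}}.$$
   Context: For a natural number $n$, let $\zeta_n=\int_0^\infty \frac{\mathrm{d}t}{\sqrt{1+t^{2n}}}$. The hyperbolic leaf function $\mathrm{sleafh}_n$ is the solution $r(l)$ on $(-\zeta_n,\zeta_n)$ of $\frac{\mathrm{d}^2r}{\mathrm{d}l^2}=n\,r^{2n-1}$ with $r(0)=0$, $r'(0)=1$; equivalently it is the inverse function of $r\mapsto \int_0^r \frac{\mathrm{d}t}{\sqrt{1+t^{2n}}}$, $r\in\mathbb{R}$. *)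

From Stdlib Require Import Reals Lra ClassicalEpsilon.
From Coquelicot Require Import Coquelicot.
Open Scope R_scope.

Definition leafF (n : nat) (r : R) : R :=
  RInt (fun t => / sqrt (1 + t ^ (2 * n))) 0 r.

Definition zeta (n : nat) : Rbar := Lim (leafF n) p_infty.

Definition sleafh (n : nat) (l : R) : R :=
  epsilon (inhabits 0) (fun r => leafF n r = l).

(* With u = s^6, the identity (1 - 8u)^3 + 64u(1 + u)^3 = (1 + 20u - 8u^2)^2 makes
   sqrt (1 + double3 s ^ 6) rational in s, sqrt (1 + s^6) and sqrt (1 - 8 s^6), and the
   derivative of leafF 3 (double3 s) comes out as twice that of leafF 3 s.  Hence
   leafF 3 (double3 s) = 2 leafF 3 s while 8 s^6 < 1.  As s increases to 2^(-1/2),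
   double3 s sweeps out [0, +oo), so zeta 3 = 2 leafF 3 (2^(-1/2)); for |2l| < zeta 3
   the point s = sleafh 3 l therefore lies in that range, and sleafh 3 (2l) = double3 s. *)

From Stdlib Require Import Reals Lra Lia ClassicalEpsilon.
From Coquelicot Require Import Coquelicot.
Open Scope R_scope.

Definition leaf_integrand (n : nat) (t : R) : R := / sqrt (1 + t ^ (2 * n)).

Section LeafIntegral.

Variable n : nat.

Lemma pow_even_ge0 (t : R) : 0 <= t ^ (2 * n).
Proof. rewrite pow_mult. apply pow_le, pow2_ge_0. Qed.

Lemma leaf_integrand_pos (t : R) : 0 < leaf_integrand n t.
Proof.
  pose proof (pow_even_ge0 t).
  apply Rinv_0_lt_compat, sqrt_lt_R0. lra.
Qed.

Lemma leaf_integrand_le1 (t : R) : leaf_integrand n t <= 1.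
Proof.
  pose proof (pow_even_ge0 t).
  assert (H1 : 1 <= sqrt (1 + t ^ (2 * n))).
  { rewrite <- sqrt_1 at 1. apply sqrt_le_1_alt. lra. }
  apply (Rinv_le_contravar 1) in H1; [|lra].
  now rewrite Rinv_1 in H1.
Qed.

Lemma leaf_integrand_opp (t : R) : leaf_integrand n (- t) = leaf_integrand n t.
Proof. unfold leaf_integrand. rewrite !pow_mult. now replace ((- t) ^ 2) with (t ^ 2) by ring. Qed.

Lemma continuous_leaf_integrand (t : R) : continuous (leaf_integrand n) t.
Proof.
  pose proof (pow_even_ge0 t).
  apply (ex_derive_continuous (leaf_integrand n)). unfold leaf_integrand. auto_derive.
  assert (0 < sqrt (1 + t ^ (2 * n))) by (apply sqrt_lt_R0; lra).
  change (n + (n + 0))%nat with (2 * n)%nat.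
  repeat split; lra.
Qed.

Lemma ex_RInt_leaf_integrand (a b : R) : ex_RInt (leaf_integrand n) a b.
Proof. apply (ex_RInt_continuous (V := R_CompleteNormedModule)). intros; apply continuous_leaf_integrand. Qed.

Lemma is_derive_leafF (x : R) : is_derive (leafF n) x (leaf_integrand n x).
Proof.
  apply (is_derive_RInt _ _ 0).
  - exists (mkposreal 1 Rlt_0_1). intros y _.
    apply (RInt_correct (V := R_CompleteNormedModule)), ex_RInt_leaf_integrand.
  - apply continuous_leaf_integrand.
Qed.

Lemma continuous_leafF (x : R) : continuous (leafF n) x.
Proof. apply (ex_derive_continuous (leafF n)). eexists. apply is_derive_leafF. Qed.

Lemma leafF_0 : leafF n 0 = 0.
Proof. apply (RInt_point (V := R_CompleteNormedModule)). Qed.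

Lemma leafF_lt (x y : R) : x < y -> leafF n x < leafF n y.
Proof.
  intro h. apply (incr_function _ m_infty p_infty (leaf_integrand n)); try easy.
  - intros; apply is_derive_leafF.
  - intros; apply leaf_integrand_pos.
Qed.

Lemma leafF_lt_reg (x y : R) : leafF n x < leafF n y -> x < y.
Proof.
  intro h. destruct (Rlt_le_dec x y) as [lt|[gt|<-]]; trivial.
  - apply leafF_lt in gt. lra.
  - lra.
Qed.

Lemma leafF_inj (x y : R) : leafF n x = leafF n y -> x = y.
Proof.
  intro E. destruct (Rtotal_order x y) as [h|[h|h]]; trivial;
  apply leafF_lt in h; lra.
Qed.

Lemma leafF_opp (x : R) : leafF n (- x) = - leafF n x.
Proof.
  unfold leafF.
  rewrite <- Ropp_0 at 1.
  rewrite <- (RInt_comp (V := R_CompleteNormedModule) _ Ropp (fun _ => -1)).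
  - rewrite <- (RInt_opp (V := R_CompleteNormedModule)) by apply ex_RInt_leaf_integrand.
    apply RInt_ext. intros y _.
    change (-1 * leaf_integrand n (- y) = - leaf_integrand n y).
    rewrite leaf_integrand_opp. ring.
  - intros; apply continuous_leaf_integrand.
  - intros y _. split.
    + now auto_derive.
    + apply continuous_const.
Qed.

Lemma leafF_sub_le (x y : R) : x <= y -> leafF n y - leafF n x <= y - x.
Proof.
  intro hxy.
  assert (Chasles : leafF n x + RInt (leaf_integrand n) x y = leafF n y).
  { apply (RInt_Chasles (V := R_CompleteNormedModule)); apply ex_RInt_leaf_integrand. }
  assert (Length : RInt (fun _ => 1) x y = y - x).
  { rewrite RInt_const. apply Rmult_1_r. }
  enough (RInt (leaf_integrand n) x y <= RInt (fun _ => 1) x y) by lra.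
  apply RInt_le; trivial.
  - apply ex_RInt_leaf_integrand.
  - apply ex_RInt_const.
  - intros; apply leaf_integrand_le1.
Qed.

Lemma sleafh_eq (r l : R) : leafF n r = l -> sleafh n l = r.
Proof.
  intro E. apply leafF_inj. unfold sleafh.
  rewrite E. apply (epsilon_spec (inhabits 0) (fun r => leafF n r = l)).
  now exists r.
Qed.

Lemma leafF_surj (r l : R) : Rabs l < leafF n r -> exists s, Rabs s < r /\ leafF n s = l.
Proof.
  intro hl.
  pose proof (Rabs_pos l).
  assert (r_pos : 0 < r) by (apply leafF_lt_reg; rewrite leafF_0; lra).
  destruct (Rabs_def2 _ _ hl) as [hl_lt hl_gt].
  destruct (IVT_gen_consistent (leafF n) (- r) r l continuous_leafF) as [s [hs hsl]].
  { rewrite leafF_opp, Rmin_left, Rmax_right; lra. }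
  rewrite Rmin_left, Rmax_right in hs by lra.
  exists s. split; trivial.
  apply Rabs_def1.
  - destruct (proj2 hs) as [lt | ->]; [exact lt | lra].
  - destruct (proj1 hs) as [lt | <-]; [exact lt |].
    rewrite leafF_opp in hsl. lra.
Qed.

End LeafIntegral.

Definition double3 (s : R) : R := 2 * s * sqrt (1 + s ^ 6) / sqrt (1 - 8 * s ^ 6).

Definition r3 : R := / sqrt 2.

Lemma pow6_ge0 (s : R) : 0 <= s ^ 6.
Proof. exact (pow_even_ge0 3 s). Qed.

Lemma r3_pos : 0 < r3.
Proof. apply Rinv_0_lt_compat, sqrt_lt_R0. lra. Qed.

Lemma r3_sqr : r3 ^ 2 = / 2.
Proof.
  unfold r3. rewrite pow_inv, <- Rsqr_pow2, Rsqr_sqrt; lra.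
Qed.

Lemma r3_pow6 : 8 * r3 ^ 6 = 1.
Proof. replace (r3 ^ 6) with ((r3 ^ 2) ^ 3) by ring. rewrite r3_sqr. field. Qed.

Lemma double3_domain (s : R) : Rabs s < r3 -> 0 < 1 - 8 * s ^ 6.
Proof.
  intro hs.
  assert (h2 : s ^ 2 < / 2).
  { rewrite <- r3_sqr, <- (pow2_abs s).
    pose proof (Rabs_pos s). pose proof r3_pos. nra. }
  pose proof (pow2_ge_0 s).
  replace (s ^ 6) with ((s ^ 2) ^ 3) by ring.
  set (u := s ^ 2) in *.
  nra.
Qed.

Section Doubling.

Variable s : R.
Hypothesis hs : 0 < 1 - 8 * s ^ 6.

Let A := sqrt (1 + s ^ 6).
Let B := sqrt (1 - 8 * s ^ 6).
Let P := 1 + 20 * s ^ 6 - 8 * s ^ 12.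

Let A_pos : 0 < A.
Proof. apply sqrt_lt_R0. pose proof (pow6_ge0 s). lra. Qed.

Let B_pos : 0 < B.
Proof. now apply sqrt_lt_R0. Qed.

Let A_sqr : A * A = 1 + s ^ 6.
Proof. apply sqrt_sqrt. pose proof (pow6_ge0 s). lra. Qed.

Let B_sqr : B * B = 1 - 8 * s ^ 6.
Proof. apply sqrt_sqrt. lra. Qed.

Lemma is_derive_double3 : is_derive double3 s (2 * P / (A * B ^ 3)).
Proof.
  unfold double3. auto_derive;
    change (s * (s * (s * (s * (s * (s * 1)))))) with (s ^ 6);
    change (1 + - (8 * s ^ 6)) with (1 - 8 * s ^ 6); fold A B.
  - pose proof (pow6_ge0 s). repeat split; lra.
  - change (s * (s * (s * (s * (s * 1))))) with (s ^ 5).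
    unfold P. field_simplify_eq; [| lra..].
    replace (A ^ 2) with (A * A) by ring. replace (B ^ 2) with (B * B) by ring.
    rewrite A_sqr, B_sqr. ring.
Qed.

Lemma sqrt_1_add_double3_pow6 : sqrt (1 + double3 s ^ 6) = P / B ^ 3.
Proof.
  pose proof (pow6_ge0 s).
  assert (P_pos : 0 < P) by (unfold P; nra).
  apply sqrt_lem_1.
  - pose proof (pow6_ge0 (double3 s)). lra.
  - apply Rlt_le, Rdiv_lt_0_compat; [exact P_pos | now apply pow_lt].
  - unfold double3. fold A B.
    replace ((2 * s * A / B) ^ 6) with (64 * s ^ 6 * (A * A) ^ 3 / (B * B) ^ 3) by (field; lra).
    replace (P / B ^ 3 * (P / B ^ 3)) with (P ^ 2 / (B * B) ^ 3) by (field; lra).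
    rewrite A_sqr, B_sqr. unfold P. field. lra.
Qed.

Lemma is_derive_leafF3_double3 :
  is_derive (fun t => leafF 3 (double3 t)) s (2 * leaf_integrand 3 s).
Proof.
  replace (2 * leaf_integrand 3 s)
    with (scal (2 * P / (A * B ^ 3)) (leaf_integrand 3 (double3 s))).
  - apply (is_derive_comp (leafF 3) double3); [apply is_derive_leafF | apply is_derive_double3].
  - change (2 * P / (A * B ^ 3) * leaf_integrand 3 (double3 s) = 2 * leaf_integrand 3 s).
    unfold leaf_integrand.
    change (2 * 3)%nat with 6%nat. rewrite sqrt_1_add_double3_pow6. fold A.
    assert (0 < P) by (pose proof (pow6_ge0 s); unfold P; nra).
    field. lra.
Qed.

End Doubling.

Lemma double3_0 : double3 0 = 0.
Proof. unfold double3. rewrite pow_i by lia. unfold Rdiv. ring. Qed.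

Lemma leafF3_double3 (s : R) : Rabs s < r3 -> leafF 3 (double3 s) = 2 * leafF 3 s.
Proof.
  intro hs.
  set (h := fun t => leafF 3 (double3 t) - 2 * leafF 3 t).
  assert (h_derive : forall t, Rabs t <= Rabs s -> is_derive h t zero).
  { intros t ht.
    assert (D := is_derive_minus _ _ t _ _
                   (is_derive_leafF3_double3 t (double3_domain t ltac:(lra)))
                   (is_derive_scal (leafF 3) t 2 _ (is_derive_leafF 3 t))).
    rewrite minus_eq_zero in D. exact D. }
  assert (h_0 : h 0 = 0).
  { unfold h. rewrite double3_0, leafF_0. ring. }
  enough (h s = 0) by (unfold h in *; lra).
  rewrite <- h_0.
  destruct (Rtotal_order s 0) as [hneg|[->|hpos]]; trivial.
  - apply eq_is_derive; trivial.
    intros t ht. apply h_derive. rewrite !Rabs_left1; lra.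
  - symmetry. apply eq_is_derive; trivial.
    intros t ht. apply h_derive. rewrite !Rabs_pos_eq; lra.
Qed.

Lemma continuous_sqrt_comp (f : R -> R) (x : R) :
  ex_derive f x -> continuous (fun s => sqrt (f s)) x.
Proof.
  intro hf. apply (continuous_comp f sqrt).
  - now apply (ex_derive_continuous f).
  - apply continuous_sqrt.
Qed.

Lemma double3_surj (y : R) : 0 <= y -> exists s, 0 <= s < r3 /\ double3 s = y.
Proof.
  intro hy.
  set (k := fun s => y * sqrt (1 - 8 * s ^ 6) - 2 * s * sqrt (1 + s ^ 6)).
  assert (k_cont : forall s, continuous k s).
  { intro s. apply (continuous_minus (fun s => y * sqrt (1 - 8 * s ^ 6))
                                     (fun s => 2 * s * sqrt (1 + s ^ 6))).
    - apply (continuous_mult (fun _ => y) (fun s => sqrt (1 - 8 * s ^ 6))).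
      + apply continuous_const.
      + apply (continuous_sqrt_comp (fun s => 1 - 8 * s ^ 6)). now auto_derive.
    - apply (continuous_mult (fun s => 2 * s)).
      + apply (ex_derive_continuous (fun s => 2 * s)). now auto_derive.
      + apply (continuous_sqrt_comp (fun s => 1 + s ^ 6)). now auto_derive. }
  pose proof r3_pos. pose proof r3_pow6.
  assert (k_0 : k 0 = y).
  { unfold k. rewrite pow_i by lia. rewrite Rmult_0_r, Rminus_0_r, Rplus_0_r, sqrt_1. ring. }
  assert (k_r3 : k r3 < 0).
  { unfold k. replace (1 - 8 * r3 ^ 6) with 0 by lra. rewrite sqrt_0.
    assert (0 < sqrt (1 + r3 ^ 6)) by (apply sqrt_lt_R0; pose proof (pow6_ge0 r3); lra).
    nra. }
  destruct (IVT_gen_consistent k 0 r3 0 k_cont) as [s [hs ks]].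
  { rewrite k_0, Rmin_right, Rmax_left; lra. }
  rewrite Rmin_left, Rmax_right in hs by lra.
  assert (s <> r3) by (intros ->; lra).
  assert (hs' : 0 <= s < r3) by lra.
  exists s. split; trivial.
  assert (0 < sqrt (1 - 8 * s ^ 6)).
  { apply sqrt_lt_R0, double3_domain. rewrite Rabs_pos_eq; lra. }
  unfold k in ks. unfold double3.
  field_simplify_eq; lra.
Qed.

Lemma is_lim_leafF3 : is_lim (leafF 3) p_infty (2 * leafF 3 r3).
Proof.
  apply is_lim_spec. intros eps. simpl.
  pose proof (cond_pos eps). pose proof r3_pos.
  set (s1 := Rmax 0 (r3 - eps / 4)).
  assert (s1_ge : 0 <= s1 /\ r3 - eps / 4 <= s1) by (split; [apply Rmax_l | apply Rmax_r]).
  assert (s1_lt : s1 < r3) by (unfold s1, Rmax; destruct Rle_dec; lra).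
  assert (s1_dom : Rabs s1 < r3) by (rewrite Rabs_pos_eq; lra).
  assert (double3_s1 : 0 <= double3 s1).
  { unfold double3. apply Rmult_le_pos.
    - apply Rmult_le_pos; [lra | apply sqrt_pos].
    - apply Rlt_le, Rinv_0_lt_compat, sqrt_lt_R0, double3_domain, s1_dom. }
  exists (double3 s1). intros x hx.
  destruct (double3_surj x ltac:(lra)) as [s [hs <-]].
  assert (s_dom : Rabs s < r3) by (rewrite Rabs_pos_eq; lra).
  assert (s1_lt_s : s1 < s).
  { apply (leafF_lt_reg 3), (Rmult_lt_reg_l 2); [lra |].
    rewrite <- !leafF3_double3 by assumption. now apply leafF_lt. }
  rewrite leafF3_double3 by assumption.
  pose proof (leafF_lt 3 s r3 (proj2 hs)).
  pose proof (leafF_sub_le 3 s r3 (Rlt_le _ _ (proj2 hs))).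
  rewrite Rabs_left; lra.
Qed.

Lemma zeta3_eq : zeta 3 = Finite (2 * leafF 3 r3).
Proof. apply is_lim_unique, is_lim_leafF3. Qed.

Theorem mainTheorem10 (l : R) :
  Rbar_lt (Rbar_opp (zeta 3)) (Finite (2 * l)) ->
  Rbar_lt (Finite (2 * l)) (zeta 3) ->
  sleafh 3 (2 * l) =
    2 * sleafh 3 l * sqrt (1 + (sleafh 3 l) ^ 6) / sqrt (1 - 8 * (sleafh 3 l) ^ 6).
Proof.
  rewrite zeta3_eq. simpl. intros hlo hhi.
  destruct (leafF_surj 3 r3 l) as [s [hs hsl]].
  { apply Rabs_def1; lra. }
  rewrite (sleafh_eq 3 s l hsl).
  change (sleafh 3 (2 * l) = double3 s).
  apply sleafh_eq.
  now rewrite leafF3_double3, hsl.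
Qed.
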